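(* Let $k\ge1$, let $\Pi_0,\Pi_1,\Pi\in\mathrm{Part}_2(2k)$ with $\Pi_0,\Pi_1$ perfect matchings and $\#(\Pi_0\vee\Pi_1\vee\Pi)=1$, and let $\varphi_0,\varphi_1$ be as follows: for $i=0,1$, $\varphi_i:\{1,\dots,2k\}\to V_i$ is a surjection whose level sets are exactly the parts of $\Pi_i\vee\Pi$, with $V_0\cap V_1=\emptyset$. Assume $\#(\Pi_0\vee\Pi_1)>1$. Then for every $A\in\Pi_0\vee\Pi_1$ there exist $m\in A$, a part $A'\in\Pi_0\vee\Pi_1$ with $A'\ne A$, and $m'\in A'$ such that $\{\varphi_0(m),\varphi_1(m)\}=\{\varphi_0(m'),\varphi_1(m')\}$.
   Context: $\mathrm{Part}(k)$ is the set of set partitions of $\{1,\dots,k\}$; $\Sigma$ refines $\Pi$ if every part of $\Sigma$ lies in a part of $\Pi$; $\Pi\vee\Sigma$ is the finest partition refined by both; a perfect matching is a partition all of whose parts have size 2; $\mathrm{Part}_2(k)$ is the set of partitions all of whose parts have size at least 2. *)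

(* Set partitions of a finite type T are represented as
   {set {set T}} satisfying MathComp's [partition P [set: T]]
   (blocks cover T, pairwise disjoint, no empty block). *)
From mathcomp Require Import all_boot.
Set Implicit Arguments. Unset Strict Implicit. Unset Printing Implicit Defensive.

Section Parts.
Variable T : finType.

Definition is_part (P : {set {set T}}) : Prop := partition P [set: T].

Definition refines (S P : {set {set T}}) : Prop :=
  forall B, B \in S -> exists2 C, C \in P & B \subset C.

Definition is_join (P Q J : {set {set T}}) : Prop :=
  [/\ is_part J, refines P J, refines Q J &
      forall K, is_part K -> refines P K -> refines Q K -> refines J K].

Definition perfect_matching (P : {set {set T}}) : Prop :=
  is_part P /\ forall B, B \in P -> #|B| = 2.

Definition part2 (P : {set {set T}}) : Prop :=
  is_part P /\ forall B, B \in P -> 2 <= #|B|.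
End Parts.

Definition level_map (T : finType) (U : Type) (V : U -> Prop)
  (phi : T -> U) (P : {set {set T}}) : Prop :=
  (forall m, V (phi m)) /\ (forall v, V v -> exists m, phi m = v) /\
  (forall B : {set T}, B \in P <->
     exists v, V v /\ forall m, m \in B <-> phi m = v).

Definition upair_eq (U : Type) (a b c d : U) : Prop :=
  forall x, (x = a \/ x = b) <-> (x = c \/ x = d).

(* If some block of Pi meets both A and its complement, two of its points m, m'
   lie in different blocks of Pi0 \/ Pi1 but in the same blocks of Pi0 \/ Pi and
   Pi1 \/ Pi, so phi0 and phi1 agree at m and m'. Otherwise every block of Pi0 \/ Pi1
   and of Pi lies in A or in its complement, so the two-block partition {A, ~A} is
   coarser than both; minimality of the join would make Pi0 \/ Pi1 \/ Pi refine it,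
   contradicting that it has a single block. *)
From mathcomp Require Import all_boot.

Set Implicit Arguments. Unset Strict Implicit. Unset Printing Implicit Defensive.

Section Partitions.
Variable T : finType.
Implicit Types (P J : {set {set T}}) (A B C : {set T}).

Lemma part_exists_block P x : is_part P -> exists2 B, B \in P & x \in B.
Proof.
move=> /and3P[/eqP covP _ _]; have xP : x \in cover P by rewrite covP inE.
by exists (pblock P x); rewrite ?pblock_mem ?mem_pblock.
Qed.

Lemma part_block_eq P B C x :
  is_part P -> B \in P -> C \in P -> x \in B -> x \in C -> B = C.
Proof.
move=> /and3P[_ tP _] BP CP xB xC.
by rewrite -(def_pblock tP BP xB) (def_pblock tP CP xC).
Qed.

Lemma part_block_neq0 P B : is_part P -> B \in P -> B != set0.
Proof. by move=> /and3P[_ _ P0] BP; apply: contraNneq P0 => <-. Qed.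

Lemma part_block_neqT P A : is_part P -> A \in P -> 1 < #|P| -> A != setT.
Proof.
move=> partP AP /card_gt1P[B [C [BP CP neBC]]].
have [D [DP neDA]] : exists D, D \in P /\ D != A.
  by case: (eqVneq B A) => [eBA|]; [exists C; rewrite -eBA eq_sym | exists B].
have /set0Pn[y yD] := part_block_neq0 partP DP.
apply: contra neDA => /eqP eAT.
by apply/eqP/(part_block_eq partP DP AP yD); rewrite eAT inE.
Qed.

Lemma part_block_sub_or_setC P A B :
  is_part P -> A \in P -> B \in P -> (B \subset A) || (B \subset ~: A).
Proof.
move=> partP AP BP; case: (eqVneq B A) => [-> | neBA]; first by rewrite subxx.
apply/orP; right; apply/subsetP => x xB; rewrite inE; apply/negP => xA.
by rewrite (part_block_eq partP BP AP xB xA) eqxx in neBA.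
Qed.

Lemma is_part_setC A : A != set0 -> A != setT -> is_part [set A; ~: A].
Proof.
move=> A0; rewrite -subTset => /subsetPn[y _ yA].
have CA0 : ~: A != set0 by apply/set0Pn; exists y; rewrite inE.
have [trivP AnC] : trivIset [set A; ~: A] /\ A \notin [set ~: A].
  apply: trivIsetU1; rewrite ?trivIset1 ?inE 1?eq_sym //.
  by move=> B; rewrite inE => /eqP->; rewrite disjoints_subset setCK.
apply/and3P; split=> //.
- by rewrite /cover big_setU1 //= big_set1 setUCr.
- by rewrite !inE negb_or !(eq_sym set0) A0 CA0.
Qed.

Lemma refines_setC P A :
  (forall B, B \in P -> (B \subset A) || (B \subset ~: A)) ->
  refines P [set A; ~: A].
Proof.
move=> sub B /sub/orP[BA | BCA]; first by exists A; rewrite ?inE ?eqxx.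
by exists (~: A); rewrite ?inE ?eqxx ?orbT.
Qed.

Lemma refines_setC_card_gt1 J A :
  is_part J -> refines J [set A; ~: A] -> A != set0 -> A != setT -> 1 < #|J|.
Proof.
move=> partJ rJ /set0Pn[x xA]; rewrite -subTset => /subsetPn[y _ yA].
have [Bx BxJ xBx] := part_exists_block x partJ.
have [By ByJ yBy] := part_exists_block y partJ.
apply/card_gt1P; exists Bx, By; split=> //; apply/eqP => eBxy.
have [C] := rJ _ BxJ; rewrite !inE => /orP[] /eqP-> /subsetP sBxC.
- by move: yA; rewrite sBxC // eBxy.
- by move: (sBxC x xBx); rewrite inE xA.
Qed.

Lemma level_map_eq (U : Type) (V : U -> Prop) (phi : T -> U) P Q B m m' :
  level_map V phi P -> refines Q P -> B \in Q -> m \in B -> m' \in B ->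
  phi m = phi m'.
Proof.
move=> [_ [_ lvl]] rQ BQ mB m'B; have [C CP /subsetP BC] := rQ B BQ.
have [v [_ Cv]] := (lvl C).1 CP.
by rewrite (Cv m).1 ?(Cv m').1 ?BC.
Qed.

End Partitions.

Theorem lemma3p5 (k : nat) (hk : 0 < k)
  (Pi0 Pi1 Pi J01 J0 J1 Jall : {set {set 'I_(2 * k)}})
  (hPi0 : perfect_matching Pi0) (hPi1 : perfect_matching Pi1) (hPi : part2 Pi)
  (hJ01 : is_join Pi0 Pi1 J01) (hJ0 : is_join Pi0 Pi J0) (hJ1 : is_join Pi1 Pi J1)
  (hJall : is_join J01 Pi Jall) (hone : #|Jall| = 1)
  (U : Type) (V0 V1 : U -> Prop) (hdisj : forall x, V0 x -> V1 x -> False)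
  (phi0 phi1 : 'I_(2 * k) -> U)
  (hphi0 : level_map V0 phi0 J0) (hphi1 : level_map V1 phi1 J1)
  (hgt : 1 < #|J01|) :
  forall A, A \in J01 ->
    exists m, exists A', exists m',
      [/\ m \in A, A' \in J01, A' != A, m' \in A' &
          upair_eq (phi0 m) (phi1 m) (phi0 m') (phi1 m')].
Proof.
move=> A AJ01; have [part01 _ _ _] := hJ01.
have [_ _ rPi0 _] := hJ0; have [_ _ rPi1 _] := hJ1.
case: (boolP [forall B in Pi, (B \subset A) || (B \subset ~: A)]) => [noStraddle | ].
  have [partJ _ _ minJ] := hJall.
  have A0 := part_block_neq0 part01 AJ01.
  have AT := part_block_neqT part01 AJ01 hgt.
  have rJ : refines Jall [set A; ~: A].
    apply: minJ; first exact: is_part_setC.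
    - by apply: refines_setC => B; apply: part_block_sub_or_setC.
    - by apply: refines_setC => B BPi; apply: (forall_inP noStraddle).
  by move: (refines_setC_card_gt1 partJ rJ A0 AT); rewrite hone.
move=> /forall_inPn[B BPi]; rewrite negb_or => /andP[/subsetPn[m' m'B m'A]].
move=> /subsetPn[m mB]; rewrite inE negbK => mA.
have [A' A'J01 m'A'] := part_exists_block m' part01.
exists m, A', m'; split=> //; first by apply: contraNneq m'A => <-.
by rewrite /upair_eq (level_map_eq hphi0 rPi0 BPi mB m'B)
  (level_map_eq hphi1 rPi1 BPi mB m'B).
Qed.
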